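(* Let $W$ be a prewedge and $a,b,v\in W$. Then $a+v\le b+v$ if and only if $a+\tfrac1n v\le b+\tfrac1n v$ for every integer $n\ge1$.
   Context: A prewedge is a set $W$ with a commutative associative addition with neutral element $0$ and a multiplication $[0,\infty)\times W\to W$, $(\lambda,v)\mapsto\lambda v$, such that $\lambda(\eta v)=(\lambda\eta)v$, $0v=0$, $1v=v$, $(\lambda+\eta)v=\lambda v+\eta v$, $\lambda(v+w)=\lambda v+\lambda w$ for all $\lambda,\eta\ge0$, $v,w\in W$. It carries the preorder $v\le w$ iff $v+z=w$ for some $z\in W$. *)

(* scalars are real numbers; the scalar multiplication is a
   total function R -> W -> W whose axioms are only required for
   nonnegative scalars, i.e. only its restriction to [0,oo) matters. *)
From Stdlib Require Import Reals.
Open Scope R_scope.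

Record Prewedge := {
  pw_carrier :> Type;
  pw_add : pw_carrier -> pw_carrier -> pw_carrier;
  pw_zero : pw_carrier;
  pw_smul : R -> pw_carrier -> pw_carrier;
  pw_addC : forall v w, pw_add v w = pw_add w v;
  pw_addA : forall u v w, pw_add u (pw_add v w) = pw_add (pw_add u v) w;
  pw_add0 : forall v, pw_add pw_zero v = v;
  pw_smulA : forall l e v, 0 <= l -> 0 <= e ->
      pw_smul l (pw_smul e v) = pw_smul (l * e) v;
  pw_smul0 : forall v, pw_smul 0 v = pw_zero;
  pw_smul1 : forall v, pw_smul 1 v = v;
  pw_smulDl : forall l e v, 0 <= l -> 0 <= e ->
      pw_smul (l + e) v = pw_add (pw_smul l v) (pw_smul e v);
  pw_smulDr : forall l v w, 0 <= l ->
      pw_smul l (pw_add v w) = pw_add (pw_smul l v) (pw_smul l w)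
}.

Definition pw_le (W : Prewedge) (v w : W) : Prop :=
  exists z : W, pw_add W v z = w.

(* Forward direction: from a + v <= b + v one gets n a + v <= n b + v by
   induction on n (add a on the left, commute, then add the hypothesis once
   more); scaling by 1/n gives a + v/n <= b + v/n. *)
From Stdlib Require Import Reals Lra Lia.
Open Scope R_scope.

Section PrewedgeOrder.

Variable W : Prewedge.

Lemma pw_addCA (x y z : W) :
  pw_add W x (pw_add W y z) = pw_add W y (pw_add W x z).
Proof. rewrite !pw_addA, (pw_addC W x y). reflexivity. Qed.

Lemma pw_le_trans (x y z : W) : pw_le W x y -> pw_le W y z -> pw_le W x z.
Proof.
  intros [d <-] [e <-]. exists (pw_add W d e). now rewrite pw_addA.
Qed.

Lemma pw_le_add2l (c x y : W) :
  pw_le W x y -> pw_le W (pw_add W c x) (pw_add W c y).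
Proof. intros [d <-]. exists d. now rewrite pw_addA. Qed.

Lemma pw_le_smul (t : R) (x y : W) :
  0 <= t -> pw_le W x y -> pw_le W (pw_smul W t x) (pw_smul W t y).
Proof. intros Ht [d <-]. exists (pw_smul W t d). now rewrite pw_smulDr. Qed.

Lemma pw_smul_natS (k : nat) (x : W) :
  pw_smul W (INR (S k)) x = pw_add W x (pw_smul W (INR k) x).
Proof.
  rewrite S_INR, Rplus_comm, pw_smulDl by (lra || apply pos_INR).
  now rewrite pw_smul1.
Qed.

Lemma pw_le_addr_smul_nat (a b v : W) (k : nat) :
  pw_le W (pw_add W a v) (pw_add W b v) ->
  pw_le W (pw_add W (pw_smul W (INR k) a) v)
          (pw_add W (pw_smul W (INR k) b) v).
Proof.
  intros Hab. induction k as [|k IH].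
  - simpl. rewrite !pw_smul0. exists (pw_zero W). now rewrite pw_addC, pw_add0.
  - rewrite !pw_smul_natS, <- !pw_addA.
    apply pw_le_trans with (pw_add W a (pw_add W (pw_smul W (INR k) b) v)).
    + now apply pw_le_add2l.
    + rewrite (pw_addCA b), (pw_addCA a). now apply pw_le_add2l.
Qed.

Lemma pw_smul_inv_nat (n : nat) (a v : W) : (1 <= n)%nat ->
  pw_smul W (/ INR n) (pw_add W (pw_smul W (INR n) a) v)
  = pw_add W a (pw_smul W (/ INR n) v).
Proof.
  intros Hn.
  assert (Hpos : 0 < INR n) by (apply lt_0_INR; lia).
  assert (Hinv : 0 <= / INR n) by (apply Rlt_le, Rinv_0_lt_compat, Hpos).
  rewrite pw_smulDr, pw_smulA, Rinv_l, pw_smul1 by (lra || assumption).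
  reflexivity.
Qed.

End PrewedgeOrder.

Theorem mainTheorem8 (W : Prewedge) (a b v : W) :
  pw_le W (pw_add W a v) (pw_add W b v) <->
  (forall n : nat, (1 <= n)%nat ->
     pw_le W (pw_add W a (pw_smul W (/ INR n) v))
             (pw_add W b (pw_smul W (/ INR n) v))).
Proof.
  split.
  - intros Hab n Hn.
    rewrite <- !pw_smul_inv_nat by exact Hn.
    apply pw_le_smul.
    + apply Rlt_le, Rinv_0_lt_compat, lt_0_INR. lia.
    + now apply pw_le_addr_smul_nat.
  - intros H. specialize (H 1%nat (le_n 1)).
    simpl in H. now rewrite Rinv_1, pw_smul1 in H.
Qed.
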